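(* Let $n\geq 2$, $m\geq 1$, $r\geq 2$ be integers and let $\alpha$ be an integer with $1\leq\alpha<(m+1)^n$. Then $\Gamma_n^{\alpha,r}$ is homotopy equivalent to the induced subcomplex of $\Gamma_n^{\alpha,r}$ on the vertex set $\{x\in V(\Gamma_n^{\alpha,r}) : |x_i|\leq\lfloor r/2\rfloor \text{ for all } 1\leq i\leq n\}$.
   Context: $\mathbb{Z}^n$ carries the Manhattan metric $d(x,y)=\sum_i|x_i-y_i|$; for $X\subseteq\mathbb{Z}^n$, $\mathrm{VR}(X;r)$ is the simplicial complex on $X$ whose simplices are finite subsets of diameter at most $r$. Let $\prec$ be the anti-lexicographic order on $\mathbb{Z}^n$: $x\prec y$ iff at the largest index $i$ with $x_i\neq y_i$ one has $x_i<y_i$. Let $V_m=\{0,\ldots,m\}^n$. Let $H$ be $V_m$ with its first $\alpha$ elements (with respect to $\prec$) removed, $\delta$ the $\prec$-least element of $H$, and $Y=\{x-\delta: x\in H\}$ (so $\mathbf{0}=(0,\ldots,0)$ is the least element of $Y$). Then $\Gamma_n^{\alpha,r}$ is the link of $\mathbf{0}$ in $\mathrm{VR}(Y;r)$, i.e. the complex of simplices $\tau$ of $\mathrm{VR}(Y;r)$ with $\mathbf{0}\notin\tau$ and $\tau\cup\{\mathbf{0}\}\in\mathrm{VR}(Y;r)$. For a simplicial complex $K$ and a set $W$ of vertices, the induced subcomplex on $W$ consists of the simplices of $K$ contained in $W$. *)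

From HB Require Import structures.
From mathcomp Require Import all_boot all_order all_algebra.
From mathcomp Require Import all_classical all_reals all_analysis.
Set Implicit Arguments. Unset Strict Implicit. Unset Printing Implicit Defensive.
Import Order.TTheory GRing.Theory Num.Theory.
Import numFieldTopology.Exports numFieldNormedType.Exports.
Local Open Scope classical_set_scope.
Local Open Scope ring_scope.

Definition homotopic_on {R : realType} {X : topologicalType}
  (A : set X) (h1 h2 : X -> X) : Prop :=
  exists H : R * X -> X,
    {within (`[0%R, 1%R] `*` A)%classic, continuous H} /\
    (forall x, A x -> H (0%R, x) = h1 x /\ H (1%R, x) = h2 x) /\
    (H @` (`[0%R, 1%R] `*` A) `<=` A)%classic.

Definition homotopy_equivalent (R : realType) {X Y : topologicalType}
  (A : set X) (B : set Y) : Prop :=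
  exists (f : X -> Y) (g : Y -> X),
    {within A, continuous f} /\ {within B, continuous g} /\
    (f @` A `<=` B)%classic /\ (g @` B `<=` A)%classic /\
    @homotopic_on R X A (g \o f) id /\ @homotopic_on R Y B (f \o g) id.

(* A simplicial complex on a finite vertex type T is given by its
   predicate of simplices K : pred {set T} (downward closed). *)
Definition realization (R : realType) (T : finType) (K : pred {set T})
  : set 'rV[R]_#|T| :=
  [set p : 'rV[R]_#|T| | (forall i, 0 <= p ord0 i) /\ \sum_i p ord0 i = 1 /\
           K (finset (fun x : T => p ord0 (enum_rank x) != 0))].

Definition induced_subcomplex (T : finType) (K : pred {set T}) (W : {set T})
  : pred {set T} := fun s => K s && (s \subset W).

Definition vertices (T : finType) (K : pred {set T}) : {set T} :=
  [set x | K [set x]%SET]%SET.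

Definition pt (n : nat) := 'I_n -> int.

Definition manhattan (n : nat) (x y : pt n) : int :=
  \sum_(i < n) `|x i - y i|%:Z.

Definition antilex (n : nat) (x y : pt n) : bool :=
  [exists i : 'I_n, (x i < y i) && [forall j : 'I_n, (i < j)%N ==> (x j == y j)]].

(* V_m = {0..m}^n, encoded as the finite type of functions 'I_n -> 'I_m.+1 *)
Definition grid (n m : nat) := {ffun 'I_n -> 'I_m.+1}.

Definition coords (n m : nat) (x : grid n m) : pt n := fun i => (x i : nat)%:Z.

(* x is among the first alpha elements of V_m w.r.t. antilex
   iff fewer than alpha elements of V_m precede it *)
Definition removed (n m alpha : nat) (x : grid n m) : bool :=
  (#|[set y : grid n m | antilex (coords y) (coords x)]%SET| < alpha)%N.

Definition Hset (n m alpha : nat) : {set grid n m} :=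
  [set x | ~~ removed alpha x]%SET.

Definition shift (n m : nat) (delta x : grid n m) : pt n :=
  fun i => coords x i - coords delta i.

Definition diam_le (n m : nat) (delta : grid n m) (r : nat) (s : {set grid n m})
  : bool :=
  [forall x in s, forall y in s,
     manhattan (shift delta x) (shift delta y) <= r%:Z].

(* Gamma_n^{alpha,r}: the link of 0 = delta - delta in VR(Y; r), with the
   vertices of Y labelled by their preimages in H (x <-> x - delta). *)
Definition Gamma (n m alpha r : nat) (delta : grid n m) : pred {set grid n m} :=
  fun s => [&& s \subset @Hset n m alpha, delta \notin s,
               diam_le delta r s & diam_le delta r (delta |: s)%SET].

Definition Wset (n m alpha r : nat) (delta : grid n m) : {set grid n m} :=
  [set x in vertices (Gamma alpha r delta) |
     [forall i : 'I_n, `|shift delta x i|%:Z <= (r %/ 2)%:Z]]%SET.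

Arguments realization R {T} K.

(* Let c = r %/ 2 and clamp every coordinate of a point of Y into [-c, c].
   Clamping is 1-Lipschitz for the Manhattan metric, and because r <= 2c + 1
   a clamped point y' stays within distance r of x whenever |x|, |y| and
   |x - y| are all at most r.  Clamping also keeps a point antilex-above 0,
   hence inside Y.  So for every simplex s of Gamma, s together with its image
   is again a simplex: the clamping map is a simplicial retraction of Gamma onto
   the induced subcomplex on W, contiguous to the identity, and the segment
   from a point of the realization to its image stays in the realization. *)

From Pilot Require Import Defs.
From HB Require Import structures.
From mathcomp Require Import all_boot all_order all_algebra.
From mathcomp Require Import all_classical all_reals all_analysis.
From mathcomp Require Import zify.
Import Order.TTheory GRing.Theory Num.Theory.
Import numFieldTopology.Exports numFieldNormedType.Exports.
Local Open Scope ring_scope.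
Set Implicit Arguments. Unset Strict Implicit.

Section Continuity.
Variables (R : realType) (N : nat).

Lemma continuous_mulmx (M : 'M[R]_N) : continuous (fun p : 'rV[R]_N => p *m M).
Proof.
have -> : (fun p : 'rV[R]_N => p *m M) = (fun p => \sum_i p 0 i *: row i M).
  by apply: funext => p; rewrite mulmx_sum_row.
suff sum_cont s : continuous (fun p : 'rV[R]_N => \sum_(i <- s) p 0 i *: row i M).
  exact: sum_cont.
elim: s => [|i s IHs]; first by under eq_fun do rewrite big_nil; exact: cst_continuous.
under eq_fun do rewrite big_cons.
move=> p; have coord_i : {for p, continuous (fun q : 'rV[R]_N => q 0 i *: row i M)}.
  by apply: continuousZ; [exact: coord_continuous | exact: cst_continuous].
exact: (continuousD coord_i (IHs p)).
Qed.

Lemma continuous_segment_homotopy (M : 'M[R]_N) :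
  continuous (fun x : R * 'rV[R]_N => (1 - x.1) *: (x.2 *m M) + x.1 *: x.2).
Proof.
have cont_fst : continuous (fun x : R * 'rV[R]_N => x.1) by move=> x; exact: cvg_fst.
have cont_snd : continuous (fun x : R * 'rV[R]_N => x.2) by move=> x; exact: cvg_snd.
move=> x.
apply: (@continuousD R 'rV[R]_N _ (fun x : R * 'rV[R]_N => (1 - x.1) *: (x.2 *m M))
                                  (fun x : R * 'rV[R]_N => x.1 *: x.2)).
- apply: (@continuousZ R 'rV[R]_N _ (fun x : R * 'rV[R]_N => 1 - x.1)
                                    (fun x : R * 'rV[R]_N => x.2 *m M)).
    by apply: continuousB; [exact: cst_continuous | exact: cont_fst].
  exact: (@continuous_comp _ _ _ (fun x : R * 'rV[R]_N => x.2) (fun p => p *m M) x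
            (cont_snd x) (@continuous_mulmx M _)).
- apply: (@continuousZ R 'rV[R]_N _ (fun x : R * 'rV[R]_N => x.1)
                                    (fun x : R * 'rV[R]_N => x.2)).
    exact: cont_fst.
  exact: cont_snd.
Qed.

Lemma homotopic_on_mulmx_id (A : set 'rV[R]_N) (M : 'M[R]_N) :
  (forall t p, 0 <= t <= 1 -> A p -> A ((1 - t) *: (p *m M) + t *: p)) ->
  @homotopic_on R _ A (fun p => p *m M) id.
Proof.
move=> segmentA.
exists (fun x : R * 'rV[R]_N => (1 - x.1) *: (x.2 *m M) + x.1 *: x.2); split.
  apply: continuous_subspaceT; exact: continuous_segment_homotopy.
split.
  by move=> p _; rewrite /= subr0 subrr scale1r !scale0r addr0 add0r scale1r.
move=> _ [[t p] [/= t01 Ap] <-] /=; apply: segmentA Ap.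
by move: t01; rewrite /= in_itv.
Qed.

End Continuity.

Section SimplicialMap.
Variables (R : realType) (T : finType).

Definition support (p : 'rV[R]_#|T|) : {set T} := [set x | p ord0 (enum_rank x) != 0].

Definition simplicial_map_mx (f : T -> T) : 'M[R]_#|T| :=
  \matrix_(i, j) (f (enum_val i) == enum_val j)%:R.

Lemma support_combination (t : R) (p q : 'rV[R]_#|T|) :
  support ((1 - t) *: q + t *: p) \subset support q :|: support p.
Proof.
apply/fintype.subsetP => x; rewrite !inE !mxE; apply: contraR; rewrite negb_or !negbK.
by move=> /andP[/eqP -> /eqP ->]; rewrite !mulr0 addr0.
Qed.

Variable f : T -> T.
Let M := simplicial_map_mx f.

Lemma simplicial_map_mx_ge0 (p : 'rV[R]_#|T|) :
  (forall i, 0 <= p ord0 i) -> forall j, 0 <= (p *m M) ord0 j.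
Proof.
move=> p_ge0 j; rewrite !mxE; apply: sumr_ge0 => i _; rewrite mxE.
by apply: mulr_ge0 => //; rewrite ler0n.
Qed.

Lemma sum_simplicial_map_mx (p : 'rV[R]_#|T|) :
  \sum_j (p *m M) ord0 j = \sum_i p ord0 i.
Proof.
under eq_bigr do rewrite !mxE.
rewrite exchange_big /=; apply: eq_bigr => i _.
rewrite (bigD1 (enum_rank (f (enum_val i)))) //= big1 ?addr0.
  by rewrite mxE enum_rankK eqxx mulr1.
move=> j j_neq; rewrite mxE; case: eqP => [fi_j | _]; last by rewrite mulr0.
by rewrite fi_j enum_valK eqxx in j_neq.
Qed.

Lemma support_simplicial_map_mx (p : 'rV[R]_#|T|) :
  support (p *m M) \subset f @: support p.
Proof.
apply/fintype.subsetP => x; rewrite inE mxE; apply: contraR => x_notin_image.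
rewrite big1 // => i _; rewrite mxE.
have [-> | p_i_neq0] := eqVneq (p ord0 i) 0; first by rewrite mul0r.
case: eqP => [fi_x | _]; last by rewrite mulr0.
rewrite enum_rankK in fi_x.
by move: x_notin_image; rewrite -fi_x imset_f // inE enum_valK.
Qed.

Lemma simplicial_map_mx_id (p : 'rV[R]_#|T|) :
  {in support p, f =1 id} -> p *m M = p.
Proof.
move=> f_id; apply/rowP => j; rewrite !mxE (bigD1 j) //= big1 ?addr0.
  rewrite mxE; have [-> | p_j_neq0] := eqVneq (p ord0 j) 0; first by rewrite mul0r.
  by rewrite f_id ?eqxx ?mulr1 // inE enum_valK.
move=> i ij; rewrite mxE; have [-> | p_i_neq0] := eqVneq (p ord0 i) 0; first by rewrite mul0r.
rewrite f_id ?inE ?enum_valK //; case: eqP => [/enum_val_inj i_j | _]; last by rewrite mulr0.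
by rewrite i_j eqxx in ij.
Qed.

End SimplicialMap.

Section ContiguousRetraction.
Variables (R : realType) (T : finType) (K : pred {set T}) (W : {set T}) (f : T -> T).
Hypothesis K_down : forall s t : {set T}, K t -> s \subset t -> K s.
Hypothesis K_setU_image : forall s, K s -> K (s :|: f @: s).
Hypothesis f_vertices : {in vertices K, forall x, f x \in W}.
Hypothesis f_W : {in W, f =1 id}.
Let M := simplicial_map_mx R f.

Lemma realization_simplicial_map p :
  realization R K p -> realization R (induced_subcomplex K W) (p *m M).
Proof.
move=> [p_ge0 [p_sum Kp]]; have K_image := K_setU_image Kp.
have supp_image := support_simplicial_map_mx f p.
split; first exact: simplicial_map_mx_ge0.
split; first by rewrite sum_simplicial_map_mx.
apply/andP; split.
  by apply: K_down K_image _; exact: fintype.subset_trans supp_image (finset.subsetUr _ _).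
apply/fintype.subsetP => _ /(fintype.subsetP supp_image) /imsetP[x xp ->].
apply: f_vertices; rewrite inE; apply: K_down Kp _.
by rewrite finset.sub1set.
Qed.

Lemma realization_induced_fixed p :
  realization R (induced_subcomplex K W) p -> p *m M = p.
Proof.
move=> [_ [_ /andP[_ supp_W]]]; apply: simplicial_map_mx_id => x x_supp.
exact/f_W/(fintype.subsetP supp_W).
Qed.

Lemma realization_segment t p : 0 <= t <= 1 -> realization R K p ->
  realization R K ((1 - t) *: (p *m M) + t *: p).
Proof.
move=> /andP[t_ge0 t_le1] [p_ge0 [p_sum Kp]].
have coordE j : ((1 - t) *: (p *m M) + t *: p) ord0 j = (1 - t) * (p *m M) ord0 j + t * p ord0 j.
  by rewrite !mxE.
split; [|split].
- move=> j; rewrite coordE addr_ge0 // mulr_ge0 ?subr_ge0 //.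
  exact: simplicial_map_mx_ge0.
- under eq_bigr do rewrite coordE.
  by rewrite big_split /= -!mulr_sumr sum_simplicial_map_mx p_sum !mulr1 subrK.
- apply: K_down (K_setU_image Kp) _.
  apply: fintype.subset_trans (support_combination _ _ _) _.
  by rewrite finset.setUC finset.setUS // support_simplicial_map_mx.
Qed.

Theorem homotopy_equivalent_induced_subcomplex :
  homotopy_equivalent R (realization R K) (realization R (induced_subcomplex K W)).
Proof.
exists (fun p => p *m M), id; split; [|split; [|split; [|split; [|split]]]].
- apply: continuous_subspaceT; exact: continuous_mulmx.
- by apply: continuous_subspaceT => p; exact: cvg_id.
- by move=> _ [p Kp <-]; exact: realization_simplicial_map.
- by move=> _ [p [p_ge0 [p_sum /andP[Kp _]]] <-].
- by apply: homotopic_on_mulmx_id => t p; exact: realization_segment.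
- apply: homotopic_on_mulmx_id => t p _ Wp.
  by rewrite realization_induced_fixed // -scalerDl subrK scale1r.
Qed.

End ContiguousRetraction.

Definition clamp (c z : int) : int := if z < - c then - c else if c < z then c else z.

Section Clamp.
Variable c : int.
Hypothesis c_ge0 : 0 <= c.

Lemma clamp_id z : `|z|%:Z <= c -> clamp c z = z.
Proof. by rewrite /clamp; repeat case: ifP; lia. Qed.

Lemma abs_clamp_le z : `|clamp c z|%:Z <= c.
Proof. by rewrite /clamp; repeat case: ifP; lia. Qed.

Lemma clamp_lipschitz a b : (`|clamp c a - clamp c b| <= `|a - b|)%N.
Proof. by rewrite /clamp; repeat case: ifP; lia. Qed.

Lemma dist_clamp_l_gt a b : (`|a - b| < `|clamp c a - b|)%N ->
  c < `|a|%:Z /\ `|clamp c a - b|%:Z <= `|b|%:Z - c.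
Proof. by rewrite /clamp; repeat case: ifP; lia. Qed.

Lemma dist_clamp_l_le_norm a b : (`|clamp c a - b| <= `|a| + `|b|)%N.
Proof. by rewrite /clamp; repeat case: ifP; lia. Qed.

End Clamp.

Lemma clamp_gt0 c z : 0 < c -> (0 < clamp c z) = (0 < z).
Proof. by rewrite /clamp; repeat case: ifP; lia. Qed.

Lemma clamp_eq0 c z : 0 < c -> (clamp c z == 0) = (z == 0).
Proof. by rewrite /clamp; repeat case: ifP; lia. Qed.

Section Manhattan.
Variable n : nat.
Implicit Types u v : pt n.

Lemma manhattan_sym u v : manhattan u v = manhattan v u.
Proof. by apply: eq_bigr => i _; lia. Qed.

Lemma manhattan_clamp c u v : 0 <= c ->
  manhattan (clamp c \o u) (clamp c \o v) <= manhattan u v.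
Proof. by move=> c_ge0; apply: ler_sum => i _; rewrite lez_nat clamp_lipschitz. Qed.

(* Clamping can only lengthen a coordinate [i0] with [|u i0| > c]; the sum is
   then bounded through the norms of [u] and [v] alone, using [r <= 2c + 1]. *)
Lemma manhattan_clamp_l c (r : int) u v : 0 <= c -> r <= 2 * c + 1 ->
  manhattan u (fun=> 0) <= r -> manhattan v (fun=> 0) <= r -> manhattan u v <= r ->
  manhattan (clamp c \o u) v <= r.
Proof.
move=> c_ge0 r_le u_le v_le uv_le.
have [i0 /(dist_clamp_l_gt c_ge0) [u_i0_gt dist_i0] | no_increase] :=
  pickP (fun i => `|u i - v i| < `|clamp c (u i) - v i|)%N; last first.
  apply: le_trans uv_le; apply: ler_sum => i _.
  by rewrite lez_nat leqNgt no_increase.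
rewrite /manhattan (bigD1 i0) //= in u_le; rewrite /manhattan (bigD1 i0) //= in v_le.
rewrite /manhattan (bigD1 i0) //=.
set SU := (X in _ + X <= r) in u_le; set SV := (X in _ + X <= r) in v_le.
set S := (X in _ + X <= r).
have others : S <= SU + SV.
  rewrite /S /SU /SV -big_split; apply: ler_sum => i _ /=.
  by rewrite !subr0 -PoszD lez_nat dist_clamp_l_le_norm.
lia.
Qed.

End Manhattan.

Section Antilex.
Variable n : nat.
Implicit Types x y z u : pt n.

Lemma antilex_irr x : ~~ antilex x x.
Proof. by apply/existsP => -[i /andP[]]; rewrite ltxx. Qed.

Lemma antilex_trans : transitive (@antilex n).
Proof.
move=> y x z /existsP[i /andP[xy_i /forallP xy_above]].
move=> /existsP[k /andP[yz_k /forallP yz_above]].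
have {}xy_above (j : 'I_n) : (i < j)%N -> x j = y j.
  by move=> ij; exact/eqP/(implyP (xy_above j)).
have {}yz_above (j : 'I_n) : (k < j)%N -> y j = z j.
  by move=> kj; exact/eqP/(implyP (yz_above j)).
apply/existsP; have [ik | ki | /val_inj ik] := ltngtP i k.
- exists k; rewrite xy_above // yz_k; apply/forall_inP => j kj.
  by rewrite xy_above ?yz_above ?(ltn_trans ik kj).
- exists i; rewrite -yz_above // xy_i; apply/forall_inP => j ij.
  by rewrite xy_above ?yz_above ?(ltn_trans ki ij).
- subst k; exists i; rewrite (lt_trans xy_i yz_k); apply/forall_inP => j ij.
  by rewrite xy_above ?yz_above.
Qed.

Lemma antilex_subr x y : antilex x y = antilex (fun=> 0) (fun i => y i - x i).
Proof.
apply: eq_existsb => i; rewrite subr_gt0; congr (_ && _).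
by apply: eq_forallb => j /=; rewrite [0 == _]eq_sym subr_eq0 [y j == _]eq_sym.
Qed.

Lemma antilex0_clamp c u : 0 < c -> antilex (fun=> 0) u -> antilex (fun=> 0) (clamp c \o u).
Proof.
move=> c_gt0 /existsP[i /andP[u_i_gt0 /forallP u_above]]; apply/existsP; exists i.
rewrite /= clamp_gt0 // u_i_gt0; apply/forallP => j; rewrite eq_sym clamp_eq0 // eq_sym.
exact: u_above.
Qed.

End Antilex.

Lemma Hset_antilex_closed n m alpha (x y : grid n m) :
  x \in Hset n m alpha -> antilex (coords x) (coords y) -> y \in Hset n m alpha.
Proof.
rewrite !inE /removed -!leqNgt => x_kept xy; apply: leq_trans x_kept _.
apply: subset_leq_card; apply/fintype.subsetP => z; rewrite !inE => zx.
exact: antilex_trans zx xy.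
Qed.

Lemma antilex_coords_shift n m (x y : grid n m) :
  antilex (coords x) (coords y) = antilex (fun=> 0) (Defs.shift x y).
Proof. exact: antilex_subr. Qed.

Section GridClamp.
Variables (n m : nat) (c : int) (delta : grid n m).

(* [delta i + clamp c (x i - delta i)] lies between [delta i] and [x i], so
   [inord] never truncates. *)
Definition grid_clamp (x : grid n m) : grid n m :=
  [ffun i => inord `|coords delta i + clamp c (Defs.shift delta x i)|].

Lemma shift_self : Defs.shift delta delta = fun=> 0.
Proof. by apply: funext => i; rewrite /Defs.shift subrr. Qed.

Hypothesis c_ge0 : 0 <= c.

Lemma shift_grid_clamp x : Defs.shift delta (grid_clamp x) = clamp c \o Defs.shift delta x.
Proof.
apply: funext => i /=; have delta_i_le := ltn_ord (delta i); have x_i_le := ltn_ord (x i).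
rewrite /Defs.shift /coords /grid_clamp ffunE /Defs.shift /coords /clamp.
by repeat case: ifP => ?; rewrite inordK; lia.
Qed.

Lemma grid_clamp_id x : (forall i, `|Defs.shift delta x i|%:Z <= c) -> grid_clamp x = x.
Proof.
move=> x_small; apply/ffunP => i; apply: val_inj.
by rewrite ffunE clamp_id // /Defs.shift /coords addrC subrK absz_nat inord_val.
Qed.

Lemma antilex_grid_clamp x : 0 < c ->
  antilex (coords delta) (coords x) -> antilex (coords delta) (coords (grid_clamp x)).
Proof.
move=> c_gt0; rewrite !antilex_coords_shift shift_grid_clamp.
exact: antilex0_clamp.
Qed.

End GridClamp.

Section Gamma.
Variables (n m alpha r : nat) (delta : grid n m).
Let c := (r %/ 2)%:Z.
Let K := Gamma alpha r delta.

Lemma diam_le_subset (s t : {set grid n m}) :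
  s \subset t -> diam_le delta r t -> diam_le delta r s.
Proof.
move=> st /forall_inP diam_t; apply/forall_inP => x xs; apply/forall_inP => y ys.
by move/forall_inP: (diam_t x (fintype.subsetP st x xs)); apply; exact: (fintype.subsetP st).
Qed.

Lemma Gamma_subset (s t : {set grid n m}) : K t -> s \subset t -> K s.
Proof.
move=> /and4P[tH delta_notin_t diam_t diam_delta_t] st; apply/and4P; split.
- exact: fintype.subset_trans st tH.
- by apply: contraNN delta_notin_t; exact: (fintype.subsetP st).
- exact: diam_le_subset diam_t.
- by apply: diam_le_subset diam_delta_t; rewrite finset.setUS.
Qed.

Lemma diam_le_setU_clamp (s : {set grid n m}) : diam_le delta r (delta |: s) ->
  diam_le delta r (delta |: (s :|: grid_clamp c delta @: s)).
Proof.
move=> diam_s.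
have c_ge0 : 0 <= c by [].
have r_le : r%:Z <= 2 * c + 1 by rewrite /c; lia.
have dist_le b1 b2 : b1 \in delta |: s -> b2 \in delta |: s ->
    manhattan (Defs.shift delta b1) (Defs.shift delta b2) <= r%:Z.
  by move=> b1_in b2_in; move/forall_inP: diam_s => /(_ b1 b1_in) /forall_inP; apply.
have norm_le b : b \in delta |: s -> manhattan (Defs.shift delta b) (fun=> 0) <= r%:Z.
  by move=> b_in; rewrite -(shift_self delta) dist_le // finset.setU11.
have decomp w : w \in delta |: (s :|: grid_clamp c delta @: s) ->
    exists2 b, b \in delta |: s & w = b \/ w = grid_clamp c delta b.
  case/finset.setU1P => [-> | /finset.setUP[w_s | /imsetP[b b_s ->]]].
  - by exists delta; [rewrite finset.setU11 | left].
  - by exists w; [rewrite finset.setU1r | left].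
  - by exists b; [rewrite finset.setU1r | right].
apply/forall_inP => _ /decomp[b1 b1_in [-> | ->]].
all: apply/forall_inP => _ /decomp[b2 b2_in [-> | ->]]; rewrite ?shift_grid_clamp //.
- exact: dist_le.
- by rewrite manhattan_sym manhattan_clamp_l ?norm_le // manhattan_sym dist_le.
- by rewrite manhattan_clamp_l ?norm_le ?dist_le.
- exact: le_trans (manhattan_clamp _ _ _) (dist_le _ _ b1_in b2_in).
Qed.

Lemma Gamma_setU_clamp (s : {set grid n m}) : (2 <= r)%N ->
  delta \in Hset n m alpha ->
  (forall y, y \in Hset n m alpha -> y != delta -> antilex (coords delta) (coords y)) ->
  K s -> K (s :|: grid_clamp c delta @: s).
Proof.
move=> r_ge2 deltaH delta_least /and4P[sH delta_notin_s diam_s diam_delta_s].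
have c_gt0 : 0 < c by rewrite /c; lia.
have above_delta x : x \in s -> antilex (coords delta) (coords (grid_clamp c delta x)).
  move=> xs; apply: antilex_grid_clamp => //; apply: delta_least.
    exact: (fintype.subsetP sH).
  by apply: contraNneq delta_notin_s => <-.
have diam_image := diam_le_setU_clamp diam_delta_s.
apply/and4P; split => //.
- apply/fintype.subsetP => _ /finset.setUP[/(fintype.subsetP sH) // | /imsetP[x xs ->]].
  exact: Hset_antilex_closed deltaH (above_delta x xs).
- rewrite finset.in_setU negb_or delta_notin_s /=; apply/imsetP => -[x xs delta_eq].
  by have := above_delta x xs; rewrite -delta_eq (negbTE (antilex_irr _)).
- by apply: diam_le_subset diam_image; rewrite finset.subsetUr.
Qed.

End Gamma.

Theorem lemma3p3 (R : realType) (n m r alpha : nat) (delta : grid n m) :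
  (2 <= n)%N -> (1 <= m)%N -> (2 <= r)%N ->
  (1 <= alpha)%N -> (alpha < m.+1 ^ n)%N ->
  (* delta is the antilex-least element of H *)
  delta \in @Hset n m alpha ->
  (forall y, y \in @Hset n m alpha -> y != delta -> antilex (coords delta) (coords y)) ->
  homotopy_equivalent R
    (realization R (Gamma alpha r delta))
    (realization R (induced_subcomplex (Gamma alpha r delta) (Wset alpha r delta))).
Proof.
move=> _ _ r_ge2 _ _ deltaH delta_least.
set f := grid_clamp (r %/ 2)%:Z delta.
have K_setU_image s : Gamma alpha r delta s -> Gamma alpha r delta (s :|: f @: s).
  exact: Gamma_setU_clamp.
apply: homotopy_equivalent_induced_subcomplex => [s t|s|x|x].
- exact: Gamma_subset.
- exact: K_setU_image.
- rewrite !inE => Kx; apply/andP; split.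
    apply: Gamma_subset (K_setU_image _ Kx) _.
    by rewrite finset.sub1set finset.in_setU finset.imset_set1 finset.set11 orbT.
  by apply/forallP => i; rewrite shift_grid_clamp // abs_clamp_le.
- by rewrite inE => /andP[_ /forallP x_small]; exact: grid_clamp_id.
Qed.
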